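(* Let $A$ be an $N\times N$ $(0,1)$-matrix such that every row and every column contains at least $N-2$ ones. Then, for all $N\geq 400$, $\operatorname{perm}(A)>\frac{1}{7.5}N!$.
   Context: $\operatorname{perm}(A)=\sum_{\pi\in\Sigma_N}\prod_{i=1}^N a_{i\pi(i)}$ is the permanent. *)

From mathcomp Require Import all_boot all_order all_algebra all_fingroup.
Set Implicit Arguments. Unset Strict Implicit. Unset Printing Implicit Defensive.
Import GRing.Theory Num.Theory.

Definition permanent (R : comRingType) (N : nat) (A : 'M[R]_N) : R :=
  (\sum_(s : 'S_N) \prod_(i < N) A i (s i))%R.

(* Call the cells where A vanishes forbidden and let W_t be the number of permutations
   hitting exactly t of them, so that perm(A) = W_0.  Every cell is hit by the same
   number (N-1)! of permutations and there are at most 2N forbidden cells, so the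
   permutations hit 2 forbidden cells on average: sum_t t W_t <= 2 N!.  A switching
   argument compares consecutive W_t: from a permutation with t+1 hits, composing with
   the transposition (i i') of a hit i and a suitable non-hit i' removes the hit at i
   and creates no new one.  There are at least (t+1)(N-t-3) such moves, and each
   permutation with t hits is reached by at most 2(N-t) of them, so
   (t+1)(N-t-3) W_(t+1) <= 2(N-t) W_t and W_t is roughly at most 2^t/t! W_0.  Since
   sum_(t<7) (7-t) W_t >= 7 N! - sum_t t W_t >= 5 N!, this forces W_0 > N!/7.5. *)

From mathcomp Require Import all_boot all_order all_algebra all_fingroup.
From mathcomp Require Import zify lra.
Import GRing.Theory Num.Theory.
Set Implicit Arguments. Unset Strict Implicit. Unset Printing Implicit Defensive.

Lemma sum_bool_card (T : finType) (P : pred T) :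
  \sum_(x : T) (P x : nat) = #|[set x | P x]|.
Proof. by rewrite -sum1dep_card [RHS]big_mkcond. Qed.

Lemma card_setC_le (T : finType) (P : pred T) k :
  #|T| - k <= #|[set x | P x]| -> #|[set x | ~~ P x]| <= k.
Proof.
have -> : [set x | ~~ P x] = ~: [set x | P x] by apply/setP => x; rewrite !inE.
by have := cardsC [set x | P x]; lia.
Qed.

Lemma card_perms (T : finType) : #|{perm T}| = #|T|`!.
Proof.
rewrite -cardsT -card_perm; apply: eq_card => s.
by rewrite !inE; apply/esym/subsetP => x; rewrite inE.
Qed.

Section AvoidingPermutations.

Variables (T : finType) (F : rel T).

Definition hits (s : {perm T}) : {set T} := [set i | F i (s i)].
Definition nhits (s : {perm T}) : nat := #|hits s|.
Definition nperm_hits (t : nat) : nat := \sum_(s : {perm T}) (nhits s == t).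

Lemma nhitsE s : nhits s = \sum_i F i (s i).
Proof. by rewrite sum_bool_card. Qed.

Lemma card_hitsC s : #|~: hits s| = #|T| - nhits s.
Proof. by have := cardsC (hits s); rewrite /nhits; lia. Qed.

Definition nperm_maps (i j : T) : nat := \sum_(s : {perm T}) (s i == j).

Lemma nperm_maps_const i j i' j' : nperm_maps i j = nperm_maps i' j'.
Proof.
have target k l : nperm_maps k l = nperm_maps l l.
  rewrite /nperm_maps (reindex_inj (mulgI (tperm k l))); apply: eq_bigr => s _.
  by rewrite permM tpermL.
have source k l : nperm_maps k l = nperm_maps k k.
  rewrite /nperm_maps (reindex_inj (mulIg (tperm k l))); apply: eq_bigr => s _.
  by rewrite permM -[X in _ == X](tpermL k l) (inj_eq perm_inj).
by rewrite target [RHS]target -(source j j') target.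
Qed.

Lemma sum_nperm_maps i : \sum_j nperm_maps i j = #|T|`!.
Proof.
transitivity (\sum_(s : {perm T}) 1); last by rewrite sum1_card card_perms.
rewrite /nperm_maps exchange_big /=; apply: eq_bigr => s _.
by rewrite (bigD1 (s i)) //= eqxx big1 // => j /negPf ji; rewrite eq_sym ji.
Qed.

Definition total_hits : nat := \sum_(s : {perm T}) nhits s.

Lemma total_hits_rows :
  total_hits = \sum_i #|[set j | F i j]| * nperm_maps i i.
Proof.
rewrite /total_hits (eq_bigr _ (fun s _ => nhitsE s)) exchange_big /=.
apply: eq_bigr => i _.
rewrite -sum_bool_card big_distrl /=.
under [RHS]eq_bigr => j _ do rewrite (nperm_maps_const i i i j) /nperm_maps big_distrr /=.
rewrite [RHS]exchange_big /=; apply: eq_bigr => s _.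
rewrite (bigD1 (s i)) //= eqxx muln1 big1 ?addn0 // => j /negPf ji.
by rewrite eq_sym ji muln0.
Qed.

Lemma weighted_nperm_hits m :
  m * #|T|`! <= total_hits + \sum_(t < m) (m - t) * nperm_hits t.
Proof.
have weight (x : nat) : \sum_(t < m) (m - t) * (x == t) = m - x.
  have [lt_xm|le_mx] := ltnP x m; last first.
    rewrite big1; first by apply/esym/eqP; rewrite subn_eq0.
    by move=> t _; rewrite gtn_eqF ?muln0 // (leq_trans (ltn_ord t)).
  rewrite (bigD1 (Ordinal lt_xm)) //= eqxx muln1 big1 ?addn0 // => t ne_t.
  rewrite (_ : x == t = false) ?muln0 //.
  by apply: contraNF ne_t => /eqP xt; apply/eqP/val_inj.
rewrite /total_hits /nperm_hits; under [X in _ + X]eq_bigr => t _ do rewrite big_distrr /=.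
rewrite [X in _ + X]exchange_big /= -big_split /= -card_perms mulnC -sum_nat_const.
by apply: leq_sum => s _; rewrite weight; lia.
Qed.

Variable d : nat.
Hypothesis row_sparse : forall i, #|[set j | F i j]| <= d.
Hypothesis col_sparse : forall j, #|[set i | F i j]| <= d.

Lemma total_hits_le : total_hits <= d * #|T|`!.
Proof.
rewrite total_hits_rows; apply: (@leq_trans (\sum_i d * nperm_maps i i)).
  by apply: leq_sum => i _; rewrite leq_mul2r row_sparse orbT.
rewrite -big_distrr leq_mul2l /=; apply/orP; right.
have [i0 _|no_index] := pickP (@predT T); last by rewrite big1 // => i; have := no_index i.
by rewrite -(sum_nperm_maps i0) (eq_bigr _ (fun i _ => nperm_maps_const i i i0 i)).
Qed.

Lemma card_row_preim (s : {perm T}) i : #|[set i' | F i (s i')]| <= d.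
Proof.
have -> : [set i' | F i (s i')] = s @^-1: [set j | F i j] by apply/setP => x; rewrite !inE.
by rewrite card_preimset ?row_sparse //; apply: perm_inj.
Qed.

Definition switch_partner (s : {perm T}) (i i' : T) : bool :=
  [&& i' \notin hits s, ~~ F i (s i') & ~~ F i' (s i)].

Lemma card_switch_partners s i : i \in hits s ->
  #|T| - (nhits s + d.-1.*2) <= \sum_i' switch_partner s i i'.
Proof.
move=> hit_i; rewrite sum_bool_card.
set B1 := [set i' | F i (s i')] :\ i.
set B2 := [set i' | F i' (s i)] :\ i.
have partners : ~: hits s :\: (B1 :|: B2) \subset [set i' | switch_partner s i i'].
  apply/subsetP => x; rewrite /switch_partner !inE.
  case: (x =P i) => [->|_] /=; first by move=> ->.
  by case/andP => /norP[-> ->] ->.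
apply: leq_trans (subset_leq_card partners).
have hi : F i (s i) by rewrite inE in hit_i.
have card_B1 : #|B1| <= d.-1.
  by have := card_row_preim s i; rewrite (cardsD1 i) inE hi -/B1; lia.
have card_B2 : #|B2| <= d.-1.
  by have := col_sparse (s i); rewrite (cardsD1 i) inE hi -/B2; lia.
have := cardsU B1 B2; have := subset_leq_card (subsetIr (~: hits s) (B1 :|: B2)).
rewrite cardsD card_hitsC; lia.
Qed.

Definition switches (t : nat) : nat :=
  \sum_(s : {perm T}) \sum_i \sum_i'
    [&& nhits s == t.+1, i \in hits s & switch_partner s i i'].

Lemma switches_ge t :
  t.+1 * (#|T| - (t.+1 + d.-1.*2)) * nperm_hits t.+1 <= switches t.
Proof.
rewrite /nperm_hits big_distrr /=; apply: leq_sum => s _.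
have [/eqP nhits_s|_] := boolP (nhits s == t.+1); last by rewrite muln0.
rewrite muln1.
rewrite (eq_bigr (fun i => if i \in hits s then \sum_i' switch_partner s i i' else 0)).
  rewrite -big_mkcond /= -nhits_s {1}/nhits -sum_nat_const.
  by apply: leq_sum => i hit_i; apply: card_switch_partners.
move=> i _ /=.
by case: (i \in hits s); last by rewrite big1.
Qed.

Lemma hits_switch s i i' : i \in hits s -> switch_partner s i i' ->
  hits (tperm i i' * s)%g = hits s :\ i.
Proof.
move=> hit_i /and3P[hit_i' Fi Fi']; rewrite inE in hit_i'.
apply/setP => x; rewrite !inE permM.
have [->|ne_xi] := eqVneq x i; first by rewrite tpermL (negPf Fi).
have [->|ne_xi'] := eqVneq x i'; first by rewrite tpermR (negPf Fi') (negPf hit_i').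
by rewrite tpermD // eq_sym.
Qed.

Lemma switch_back t s i i' :
  [&& nhits (tperm i i' * s)%g == t.+1, i \in hits (tperm i i' * s)%g
    & switch_partner (tperm i i' * s)%g i i'] ->
  [&& nhits s == t, i \notin hits s & F i (s i')].
Proof.
set s0 := (tperm i i' * s)%g => /and3P[/eqP nhits_s0 hit_i partner].
have -> : s = (tperm i i' * s0)%g by rewrite mulgA tperm2 mul1g.
have hits_s := hits_switch hit_i partner.
rewrite /nhits hits_s setD11 /= permM tpermR.
have := cardsD1 i (hits s0); rewrite hit_i -/(nhits s0) nhits_s0 add1n => -[->].
by rewrite eqxx; rewrite inE in hit_i.
Qed.

Lemma switches_le t : switches t <= d * (#|T| - t) * nperm_hits t.
Proof.
rewrite /switches exchange_big /=; under eq_bigr => i _ do rewrite exchange_big /=.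
apply: (@leq_trans (\sum_i \sum_i' \sum_(s : {perm T})
    [&& nhits s == t, i \notin hits s & F i (s i')])).
  apply: leq_sum => i _; apply: leq_sum => i' _.
  rewrite (reindex_inj (mulgI (tperm i i'))) /=; apply: leq_sum => s _.
  by case: (boolP [&& _, _ & _]) => // /switch_back ->.
under eq_bigr => i _ do rewrite exchange_big /=; rewrite exchange_big /=.
rewrite /nperm_hits big_distrr /=; apply: leq_sum => s _.
have [/eqP nhits_s|_] := boolP (nhits s == t); last first.
  by rewrite muln0 big1 // => i _; rewrite big1.
apply: (@leq_trans (\sum_i (i \notin hits s) * d)).
  apply: leq_sum => i _; case: (i \notin hits s); last by rewrite big1.
  by rewrite mul1n (sum_bool_card (fun i' => F i (s i'))) card_row_preim.
rewrite -big_distrl /= (sum_bool_card (fun i => i \notin hits s)) muln1 mulnC leq_mul2l.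
have -> : [set i | i \notin hits s] = ~: hits s by apply/setP => x; rewrite !inE.
by rewrite card_hitsC nhits_s leqnn orbT.
Qed.

Lemma switching t :
  t.+1 * (#|T| - (t.+1 + d.-1.*2)) * nperm_hits t.+1 <= d * (#|T| - t) * nperm_hits t.
Proof. exact: leq_trans (switches_ge t) (switches_le t). Qed.

End AvoidingPermutations.

(* (N - t) / (N - t - 3) decreases with N, so the ratio at N = 400 bounds all larger N. *)
Lemma switching_ratio_400 (a b N t : nat) : 400 <= N -> t <= 5 ->
  t.+1 * (N - (t.+1 + 2)) * b <= 2 * (N - t) * a ->
  t.+1 * (397 - t) * b <= 2 * (400 - t) * a.
Proof.
move=> hN ht.
have [M ->] : exists M, N = M + 400 by exists (N - 400); lia.
have -> : M + 400 - (t.+1 + 2) = M + (397 - t) by lia.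
have -> : M + 400 - t = M + (397 - t) + 3 by lia.
have -> : 400 - t = (397 - t) + 3 by lia.
have : 392 <= 397 - t by lia.
move: (397 - t) (t.+1) => k u hk.
nia.
Qed.

Lemma nperm_hits0_gt (T : finType) (F : rel T) : 400 <= #|T| ->
  (forall i, #|[set j | F i j]| <= 2) -> (forall j, #|[set i | F i j]| <= 2) ->
  2 * #|T|`! < 15 * nperm_hits F 0.
Proof.
move=> large rows cols.
have mean := total_hits_le rows.
have weights := weighted_nperm_hits F 7.
rewrite -(big_mkord xpredT (fun t => (7 - t) * nperm_hits F t)) in weights.
rewrite !big_nat_recr //= big_geq // in weights.
have ratio t (ht : t <= 5) := switching_ratio_400 large ht (switching rows cols t).
have := ratio 0 isT; have := ratio 1 isT; have := ratio 2 isT.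
have := ratio 3 isT; have := ratio 4 isT; have := ratio 5 isT.
move: (fact_gt0 #|T|) mean weights; move: #|T|`! => n.
(* The ratios give W_t <= c_t W_0 with sum_(t<7) (7-t) c_t < 37.5 = 5 * 7.5. *)
lia.
Qed.

Lemma permanent_01 (R : comNzRingType) N (A : 'M[R]_N) :
  (forall i j, A i j = 0%R \/ A i j = 1%R) ->
  permanent A = (nperm_hits (fun i j => A i j != 1%R) 0)%:R%R.
Proof.
move=> A01; rewrite /permanent /nperm_hits natr_sum; apply: eq_bigr => s _.
pose F (i j : 'I_N) := A i j != 1%R; rewrite -/F.
have [no_hit|/set0Pn[i hit_i]] := eqVneq (hits F s) set0.
  rewrite /nhits no_hit cards0 big1 // => i _.
  by move/setP/(_ i): no_hit; rewrite !inE => /negbFE/eqP.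
have -> : (nhits F s == 0) = false.
  by apply/negbTE; rewrite -lt0n card_gt0; apply/set0Pn; exists i.
rewrite (bigD1 i) //=; have [->|A1] := A01 i (s i); first by rewrite mul0r.
by rewrite inE /F A1 eqxx in hit_i.
Qed.

Unset Implicit Arguments.
Theorem lemma14 (N : nat) (A : 'M[rat]_N) :
  (400 <= N)%N ->
  (forall i j, A i j = 0%R \/ A i j = 1%R) ->
  (forall i : 'I_N, (N - 2 <= #|[set j | A i j == 1%R]|)%N) ->
  (forall j : 'I_N, (N - 2 <= #|[set i | A i j == 1%R]|)%N) ->
  ((N`!)%:R / (15%:R / 2%:R) < permanent A)%R.
Proof.
move=> large A01 rows cols; rewrite permanent_01 //.
have sparse_rows i : #|[set j | A i j != 1%R]| <= 2.
  by apply: card_setC_le; rewrite card_ord.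
have sparse_cols j : #|[set i | A i j != 1%R]| <= 2.
  by apply: card_setC_le; rewrite card_ord.
have := nperm_hits0_gt _ sparse_rows sparse_cols.
rewrite card_ord => /(_ large).
by rewrite -(ltr_nat rat) !natrM => ?; lra.
Qed.
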